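(* Let $\alpha=0.8$, let $x\sim\mathcal N(0,1)$ and let $b\in\{0,1\}$ be independent of $x$ with $\mathbb P(b=1)=\alpha$. For $w>0$ let $\tau_w>0$ be the unique number with $\mathbb P(|b-xw|<\tau_w)=1-\alpha$, let $A_w=\{|b-xw|<\tau_w\}$, and define the population TORRENT update $$F(w)=\frac{\mathbb E[b\,x\,\mathbb I(A_w)]}{\mathbb E[x^2\,\mathbb I(A_w)]}.$$ Then there exists $w>1/2$ with $F(w)=w$; i.e., TORRENT in the infinite-sample limit, for the model $y=xw^*+b$ with $w^*=0$, has a fixed point at distance greater than $1/2$ from $w^*$.
   Context: TORRENT is the alternating procedure that, given the current $w$, keeps the $(1-\alpha)$ fraction of points with the smallest absolute residuals $|y_i-x_iw|$ and refits least squares on them; $F$ is its $n\to\infty$ limit for one-dimensional data $y_i=x_iw^*+b_i$ with $w^*=0$, $x_i$ i.i.d. $\mathcal N(0,1)$ and an $\alpha$ fraction of $b_i$ equal to $1$ (the rest $0$), independent of the $x_i$. $\mathbb I$ is the indicator. *)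

From Stdlib Require Import Reals Lra ClassicalEpsilon.
Open Scope R_scope.

(* Definite Riemann integral of f over [a,b] (value independent of the
   integrability proof, by RiemannInt_P5); 0 if f is not integrable
   (never happens below: all integrands are continuous). *)
Definition Rint (f : R -> R) (a b : R) : R :=
  match excluded_middle_informative (inhabited (Riemann_integrable f a b)) with
  | left H => RiemannInt (epsilon H (fun _ => True))
  | right _ => 0
  end.

Definition phi (x : R) : R := exp (- (x ^ 2) / 2) / sqrt (2 * PI).

Definition alpha : R := 8 / 10.

(* For w > 0 and b in {0,1}: |b - x w| < tau  <->  (b - tau)/w < x < (b + tau)/w.
   E_A g w tau := E[ g(b,x) * I(|b - x w| < tau) ] where x ~ N(0,1) and
   b ~ Bernoulli(alpha), independent. *)
Definition EA (g : R -> R -> R) (w tau : R) : R :=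
  (1 - alpha) * Rint (fun x => g 0 x * phi x) ((0 - tau) / w) ((0 + tau) / w)
  + alpha * Rint (fun x => g 1 x * phi x) ((1 - tau) / w) ((1 + tau) / w).

Definition probA (w tau : R) : R := EA (fun _ _ => 1) w tau.

Definition Fupd (w tau : R) : R :=
  EA (fun b x => b * x) w tau / EA (fun _ x => x ^ 2) w tau.

From Stdlib Require Import Reals Lra Lia ClassicalEpsilon Ranalysis5.
From Coquelicot Require Import Coquelicot.
Open Scope R_scope.

(* Write [gauss x = exp (-x^2/2)], so that the N(0,1) density
   is [gauss / sqrt2pi].  Every expectation in the statement is an integral of
   [1], [b x] or [x^2] against the density over the two windows
   [((b - t)/w, (b + t)/w)], b = 0, 1; by the fundamental theorem of calculus
   it is a combination ([window]) of values of the antiderivatives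
   [gauss_int] (of [gauss]), [gauss_m2] (of [x^2 gauss]) and [- gauss].
   Then:
   - [mass w t] (= sqrt2pi * P(A_w)) is strictly increasing and continuous in
     [t], so the threshold [tau w] exists, is unique and is continuous in [w];
   - [F(w) = w] iff [fixed_gap w := w * denom - numer] vanishes at [tau w];
   - [fixed_gap] is continuous, negative at [w = 1/2] and positive at [w = 3]
     (certified by alternating Taylor enclosures of [gauss] and [gauss_int]),
     so the intermediate value theorem gives a root [w] in (1/2, 3].
   The file develops, in order: calculus lemmas, the Gaussian antiderivatives,
   the Taylor enclosures, the closed forms, the threshold, and the sign change. *)

Lemma continuity_pt_of_ex_derive (f : R -> R) (x : R) :
  ex_derive f x -> continuity_pt f x.
Proof.
  intros H. apply continuity_pt_filterlim.
  apply (@ex_derive_continuous R_AbsRing R_NormedModule), H.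
Qed.

Lemma le_of_derive_nonneg (f f' : R -> R) (a b : R) :
  a <= b -> (forall x, is_derive f x (f' x)) ->
  (forall x, a <= x <= b -> 0 <= f' x) -> f a <= f b.
Proof.
  intros Hab Hf Hpos.
  destruct (MVT_gen f a b f') as [c [Hc E]].
  - intros; apply Hf.
  - intros; apply continuity_pt_of_ex_derive; eexists; apply Hf.
  - rewrite Rmin_left, Rmax_right in Hc by lra.
    assert (0 <= f' c * (b - a)) by (apply Rmult_le_pos; [apply Hpos|]; lra).
    lra.
Qed.

Lemma lt_of_derive_pos (f f' : R -> R) (a b : R) :
  a < b -> (forall x, is_derive f x (f' x)) ->
  (forall x, a <= x <= b -> 0 < f' x) -> f a < f b.
Proof.
  intros Hab Hf Hpos.
  destruct (MVT_gen f a b f') as [c [Hc E]].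
  - intros; apply Hf.
  - intros; apply continuity_pt_of_ex_derive; eexists; apply Hf.
  - rewrite Rmin_left, Rmax_right in Hc by lra.
    assert (0 < f' c * (b - a)) by (apply Rmult_lt_0_compat; [apply Hpos|]; lra).
    lra.
Qed.

Lemma const_of_derive_zero (f : R -> R) (a b : R) :
  (forall x, is_derive f x 0) -> f a = f b.
Proof.
  intros Hf.
  assert (Hmono : forall u v, u <= v -> f u = f v).
  { intros u v Huv.
    assert (f u <= f v) by (apply (le_of_derive_nonneg f (fun _ => 0)); auto; intros; lra).
    assert (- f u <= - f v).
    { apply (le_of_derive_nonneg (fun x => - f x) (fun _ => 0)); auto; [|intros; lra].
      intros x. rewrite <- Ropp_0. apply (is_derive_opp f), Hf. }
    lra. }
  destruct (Rle_dec a b); [apply Hmono | symmetry; apply Hmono]; lra.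
Qed.

Lemma le_of_derive_le (f g f' g' : R -> R) :
  (forall x, is_derive f x (f' x)) -> (forall x, is_derive g x (g' x)) ->
  f 0 = g 0 -> (forall x, 0 <= x -> f' x <= g' x) ->
  forall y, 0 <= y -> f y <= g y.
Proof.
  intros Hf Hg E Hle y Hy.
  assert (g 0 - f 0 <= g y - f y).
  { apply (le_of_derive_nonneg (fun x => g x - f x) (fun x => g' x - f' x)); auto.
    - intros x; apply (is_derive_minus g f); auto.
    - intros x Hx. specialize (Hle x (proj1 Hx)). lra. }
  lra.
Qed.

Lemma Rint_antiderivative (f F : R -> R) (a b : R) :
  (forall x, is_derive F x (f x)) -> (forall x, continuous f x) ->
  Rint f a b = F b - F a.
Proof.
  intros HF Hf. unfold Rint.
  destruct excluded_middle_informative as [H|H].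
  - rewrite <- RInt_Reals. apply is_RInt_unique.
    apply (is_RInt_derive F f a b); intros; auto.
  - exfalso; apply H. constructor. apply ex_RInt_Reals_0.
    apply (@ex_RInt_continuous R_CompleteNormedModule). intros; auto.
Qed.

(* The Gaussian kernel and its two antiderivatives [gauss_int x = int_0^x gauss]
   and [gauss_m2 x = int_0^x t^2 gauss t dt = gauss_int x - x gauss x]. *)
Definition gauss (x : R) : R := exp (- (x ^ 2) / 2).
Definition gauss_int (x : R) : R := RInt gauss 0 x.
Definition gauss_m2 (x : R) : R := gauss_int x - x * gauss x.

Lemma gauss_pos x : 0 < gauss x.
Proof. apply exp_pos. Qed.

Lemma gauss_derive x : is_derive gauss x (- x * gauss x).
Proof.
  unfold gauss. auto_derive; auto.
  replace (- (x * (x * 1)) * / 2) with (- x ^ 2 / 2) by (simpl; field).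
  change (RinvImpl.Rinv 2) with (/ 2). field.
Qed.

Lemma gauss_continuous x : continuous gauss x.
Proof. apply (@ex_derive_continuous R_AbsRing R_NormedModule). eexists; apply gauss_derive. Qed.

Lemma gauss_antitone x y : 0 <= x <= y -> gauss y <= gauss x.
Proof.
  intros H. unfold gauss. destruct (Req_dec x y) as [->|Hxy]; [lra|].
  left. apply exp_increasing. assert (x ^ 2 < y ^ 2) by nra. lra.
Qed.

Lemma gauss_int_derive x : is_derive gauss_int x (gauss x).
Proof.
  apply is_derive_RInt with (a := 0).
  - exists (mkposreal _ Rlt_0_1); intros y _. apply (@RInt_correct R_CompleteNormedModule).
    apply (@ex_RInt_continuous R_CompleteNormedModule). intros; apply gauss_continuous.
  - apply gauss_continuous.
Qed.

Lemma gauss_int_0 : gauss_int 0 = 0.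
Proof. apply (@RInt_point R_CompleteNormedModule). Qed.

Lemma gauss_int_lt x y : x < y -> gauss_int x < gauss_int y.
Proof. intros H. apply (lt_of_derive_pos gauss_int gauss); auto using gauss_int_derive, gauss_pos. Qed.

Lemma gauss_int_le x y : x <= y -> gauss_int x <= gauss_int y.
Proof.
  intros H. apply (le_of_derive_nonneg gauss_int gauss); auto using gauss_int_derive.
  intros; left; apply gauss_pos.
Qed.

(* [gauss] is even, hence its integral from 0 is odd. *)
Lemma gauss_int_odd x : gauss_int (- x) = - gauss_int x.
Proof.
  assert (E : gauss_int (- x) + gauss_int x = gauss_int (- 0) + gauss_int 0).
  { apply (const_of_derive_zero (fun y => gauss_int (- y) + gauss_int y)). intros y.
    replace 0 with (- 1 * gauss (- y) + gauss y)
      by (unfold gauss; replace ((- y) ^ 2) with (y ^ 2) by ring; ring).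
    apply (is_derive_plus (fun y => gauss_int (- y)) gauss_int); [|apply gauss_int_derive].
    apply (is_derive_comp gauss_int (fun y => - y)); [apply gauss_int_derive|].
    auto_derive; auto; ring. }
  rewrite Ropp_0, gauss_int_0 in E. lra.
Qed.

Lemma gauss_m2_derive x : is_derive gauss_m2 x (x ^ 2 * gauss x).
Proof.
  unfold gauss_m2.
  replace (x ^ 2 * gauss x) with (gauss x - (1 * gauss x + x * (- x * gauss x))) by ring.
  apply (is_derive_minus gauss_int (fun x => x * gauss x)); [apply gauss_int_derive|].
  apply (is_derive_mult (fun x => x) gauss); [auto_derive; auto | apply gauss_derive |].
  intros; apply Rmult_comm.
Qed.

Lemma gauss_m2_le x y : x <= y -> gauss_m2 x <= gauss_m2 y.
Proof.
  intros H. apply (le_of_derive_nonneg gauss_m2 (fun x => x ^ 2 * gauss x)); auto using gauss_m2_derive.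
  intros z _. apply Rmult_le_pos; [apply pow2_ge_0 | left; apply gauss_pos].
Qed.

Lemma gauss_m2_odd x : gauss_m2 (- x) = - gauss_m2 x.
Proof.
  unfold gauss_m2, gauss. rewrite gauss_int_odd.
  replace ((- x) ^ 2) with (x ^ 2) by ring. ring.
Qed.

Lemma gauss_m2_pos x : 0 < x -> 0 < gauss_m2 x.
Proof.
  intros Hx.
  assert (gauss_m2 0 = 0) by (unfold gauss_m2; rewrite gauss_int_0; ring).
  assert (gauss_m2 (x / 2) < gauss_m2 x).
  { apply (lt_of_derive_pos gauss_m2 (fun x => x ^ 2 * gauss x)); auto using gauss_m2_derive; [lra|].
    intros z Hz. apply Rmult_lt_0_compat; [apply pow_lt; lra | apply gauss_pos]. }
  assert (gauss_m2 0 <= gauss_m2 (x / 2)) by (apply gauss_m2_le; lra).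
  lra.
Qed.

(* Alternating Taylor enclosures.  [exp_coef k = (-1)^k / k!] (defined by its
   recurrence so that it computes); [exp_taylor y n] is the degree-n Taylor
   polynomial of [exp (- y)], and [gauss_int_taylor x n] is its termwise
   integral after substituting [y = t^2/2], i.e. a polynomial approximation of
   [gauss_int]. *)
Fixpoint exp_coef (k : nat) : R :=
  match k with 0%nat => 1 | S k' => exp_coef k' * (-1) / INR (S k') end.

Definition exp_taylor (y : R) (n : nat) : R := sum_f_R0 (fun k => y ^ k * exp_coef k) n.

Definition gauss_int_term (x : R) (k : nat) : R :=
  x ^ (2 * k + 1) * exp_coef k / (2 ^ k * INR (2 * k + 1)).

Definition gauss_int_taylor (x : R) (n : nat) : R := sum_f_R0 (gauss_int_term x) n.

Lemma exp_taylor_0 n : exp_taylor 0 n = 1.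
Proof. induction n as [|n IH]; unfold exp_taylor in *; simpl; [|rewrite IH]; ring. Qed.

Lemma exp_taylor_derive_0 y : is_derive (fun y => exp_taylor y 0) y 0.
Proof. unfold exp_taylor; simpl. auto_derive; auto. Qed.

Lemma exp_taylor_derive n y : is_derive (fun y => exp_taylor y (S n)) y (- exp_taylor y n).
Proof.
  induction n as [|n IH].
  - unfold exp_taylor; simpl. auto_derive; auto. field.
  - unfold exp_taylor.
    change (is_derive (fun y => exp_taylor y (S n) + y ^ (S (S n)) * exp_coef (S (S n))) y
      (- (exp_taylor y n + y ^ (S n) * exp_coef (S n)))).
    assert (HSn : INR (S (S n)) <> 0) by (apply not_0_INR; lia).
    replace (- (exp_taylor y n + y ^ (S n) * exp_coef (S n))) with
      (- exp_taylor y n + INR (S (S n)) * y ^ (S n) * exp_coef (S (S n)))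
      by (change (exp_coef (S (S n))) with (exp_coef (S n) * (-1) / INR (S (S n))); field; auto).
    apply (is_derive_plus (fun y => exp_taylor y (S n))); [apply IH|].
    auto_derive; auto. simpl pred.
    change (match n with 0%nat => 1 | S _ => INR n + 1 end) with (INR (S n)).
    rewrite <- S_INR.
    change (exp_coef (S (S n))) with (exp_coef n * -1 / INR (S n) * -1 / INR (S (S n))).
    change (y ^ S n) with (y * y ^ n). ring.
Qed.

Lemma exp_neg_derive y : is_derive (fun y => exp (- y)) y (- exp (- y)).
Proof. auto_derive; auto. ring. Qed.

Lemma exp_taylor_bounds m y :
  0 <= y -> exp (- y) <= exp_taylor y (2 * m) /\ exp_taylor y (2 * m + 1) <= exp (- y).
Proof.
  revert y.
  assert (Hstart : forall n, exp_taylor 0 n = exp (- 0)) by (intros; rewrite exp_taylor_0, Ropp_0, exp_0; auto).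
  assert (Hodd : forall m, (forall y, 0 <= y -> exp (- y) <= exp_taylor y (2 * m)) ->
                  forall y, 0 <= y -> exp_taylor y (2 * m + 1) <= exp (- y)).
  { intros k Heven. replace (2 * k + 1)%nat with (S (2 * k)) by lia.
    apply (le_of_derive_le _ _ (fun y => - exp_taylor y (2 * k)) (fun y => - exp (- y)));
      auto using exp_taylor_derive, exp_neg_derive.
    intros x Hx. specialize (Heven x Hx). lra. }
  induction m as [|m IH].
  - assert (Heven : forall y, 0 <= y -> exp (- y) <= exp_taylor y (2 * 0)).
    { apply (le_of_derive_le _ _ (fun y => - exp (- y)) (fun _ => 0));
        auto using exp_neg_derive, exp_taylor_derive_0.
      intros x _. generalize (exp_pos (- x)); lra. }
    split; auto.
  - assert (Heven : forall y, 0 <= y -> exp (- y) <= exp_taylor y (2 * S m)).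
    { replace (2 * S m)%nat with (S (2 * m + 1)) by lia.
      apply (le_of_derive_le _ _ (fun y => - exp (- y)) (fun y => - exp_taylor y (2 * m + 1)));
        auto using exp_neg_derive, exp_taylor_derive.
      intros x Hx. destruct (IH x Hx). lra. }
    split; auto.
Qed.

Lemma gauss_eq_exp_neg x : gauss x = exp (- (x ^ 2 / 2)).
Proof. unfold gauss. f_equal. field. Qed.

Lemma gauss_le_taylor m x : gauss x <= exp_taylor (x ^ 2 / 2) (2 * m).
Proof. rewrite gauss_eq_exp_neg. apply exp_taylor_bounds. generalize (pow2_ge_0 x); lra. Qed.

Lemma taylor_le_gauss m x : exp_taylor (x ^ 2 / 2) (2 * m + 1) <= gauss x.
Proof. rewrite gauss_eq_exp_neg. apply exp_taylor_bounds. generalize (pow2_ge_0 x); lra. Qed.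

Lemma gauss_int_term_derive k x :
  is_derive (fun x => gauss_int_term x k) x ((x ^ 2 / 2) ^ k * exp_coef k).
Proof.
  unfold gauss_int_term. auto_derive; auto.
  replace (k + (k + 0) + 1)%nat with (2 * k + 1)%nat by lia.
  replace (Init.Nat.pred (2 * k + 1)) with (2 * k)%nat by lia.
  rewrite pow_mult. unfold Rdiv. rewrite Rpow_mult_distr, pow_inv.
  assert (INR (2 * k + 1) <> 0) by (apply not_0_INR; lia).
  assert (2 ^ k <> 0) by (apply pow_nonzero; lra).
  field; auto.
Qed.

Lemma gauss_int_taylor_derive n x :
  is_derive (fun x => gauss_int_taylor x n) x (exp_taylor (x ^ 2 / 2) n).
Proof.
  induction n as [|n IH]; [apply gauss_int_term_derive|].
  apply (is_derive_plus (fun x => gauss_int_taylor x n) (fun x => gauss_int_term x (S n)));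
    [apply IH | apply gauss_int_term_derive].
Qed.

Lemma gauss_int_taylor_0 n : gauss_int_taylor 0 n = 0.
Proof.
  induction n as [|n IH]; unfold gauss_int_taylor in *; simpl sum_f_R0; [|rewrite IH];
    unfold gauss_int_term; rewrite pow_i by lia; unfold Rdiv; ring.
Qed.

Lemma gauss_int_le_taylor m x : 0 <= x -> gauss_int x <= gauss_int_taylor x (2 * m).
Proof.
  apply (le_of_derive_le gauss_int (fun x => gauss_int_taylor x (2 * m)) gauss
    (fun x => exp_taylor (x ^ 2 / 2) (2 * m)));
    auto using gauss_int_derive, gauss_int_taylor_derive, gauss_le_taylor.
  rewrite gauss_int_taylor_0, gauss_int_0; reflexivity.
Qed.

Lemma taylor_le_gauss_int m x : 0 <= x -> gauss_int_taylor x (2 * m + 1) <= gauss_int x.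
Proof.
  apply (le_of_derive_le (fun x => gauss_int_taylor x (2 * m + 1)) gauss_int
    (fun x => exp_taylor (x ^ 2 / 2) (2 * m + 1)) gauss);
    auto using gauss_int_derive, gauss_int_taylor_derive, taylor_le_gauss.
  rewrite gauss_int_taylor_0, gauss_int_0; reflexivity.
Qed.

(* Certified numerical bounds: degree 14/15 enclosures, evaluated exactly. *)
Ltac eval_taylor :=
  unfold gauss_int_taylor, gauss_int_term, exp_taylor; simpl sum_f_R0; simpl exp_coef;
  simpl INR; simpl Nat.mul; lra.
Ltac gauss_upper := eapply Rle_trans; [apply (gauss_le_taylor 7) | eval_taylor].
Ltac gauss_lower := eapply Rle_trans; [| apply (taylor_le_gauss 7)]; eval_taylor.
Ltac gauss_int_upper := eapply Rle_trans; [apply (gauss_int_le_taylor 7); lra | eval_taylor].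
Ltac gauss_int_lower := eapply Rle_trans; [| apply (taylor_le_gauss_int 7); lra]; eval_taylor.

(* With [x ~ N(0,1)] and [b] in {0,1},
   each expectation [EA g w t] splits into two integrals of [g b x * phi x]
   over the windows [((b - t)/w, (b + t)/w)]; when [F_b' = g b * gauss] these
   are increments of [F_b], collected in [window F0 F1 w t] (up to the
   normalising constant [sqrt2pi]). *)
Definition sqrt2pi : R := sqrt (2 * PI).

Lemma sqrt2pi_pos : 0 < sqrt2pi.
Proof. apply sqrt_lt_R0. generalize PI_RGT_0; lra. Qed.

Lemma sqrt2pi_bounds : 25066 / 10000 < sqrt2pi < 25067 / 10000.
Proof.
  assert (Hpi : 314155 / 100000 < PI < 314165 / 100000).
  { assert (H := PI_2_3_7_ineq 3). unfold tg_alt, PI_2_3_7_tg, Ratan_seq in H. simpl in H. lra. }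
  assert (Hsq : sqrt2pi * sqrt2pi = 2 * PI) by (apply sqrt_sqrt; lra).
  generalize sqrt2pi_pos; split; nra.
Qed.

Definition window (F0 F1 : R -> R) (w t : R) : R :=
  (1 - alpha) * (F0 ((0 + t) / w) - F0 ((0 - t) / w))
  + alpha * (F1 ((1 + t) / w) - F1 ((1 - t) / w)).

Lemma EA_window (g : R -> R -> R) (F0 F1 : R -> R) (w t : R) :
  (forall x, is_derive F0 x (g 0 x * gauss x)) ->
  (forall x, is_derive F1 x (g 1 x * gauss x)) ->
  (forall b x, continuous (g b) x) ->
  EA g w t = window F0 F1 w t / sqrt2pi.
Proof.
  intros H0 H1 Hg.
  assert (Hanti : forall h F : R -> R, (forall x, is_derive F x (h x * gauss x)) ->
            forall x, is_derive (fun x => / sqrt2pi * F x) x (h x * phi x)).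
  { intros h F HF x. replace (h x * phi x) with (/ sqrt2pi * (h x * gauss x))
      by (unfold phi, gauss, sqrt2pi, Rdiv; ring).
    apply is_derive_scal, HF. }
  assert (Hcont : forall b x, continuous (fun x => g b x * phi x) x).
  { intros b x. apply (continuous_mult (K := R_AbsRing)); [apply Hg|].
    apply (@ex_derive_continuous R_AbsRing R_NormedModule). unfold phi. auto_derive. auto. }
  unfold EA, window.
  rewrite (Rint_antiderivative _ (fun x => / sqrt2pi * F0 x)), (Rint_antiderivative _ (fun x => / sqrt2pi * F1 x))
    by auto.
  field. apply Rgt_not_eq, sqrt2pi_pos.
Qed.

(* [sqrt2pi] times P(A_w), E[b x I(A_w)] and E[x^2 I(A_w)] for threshold [t]. *)
Definition mass (w t : R) : R := window gauss_int gauss_int w t.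
Definition numer (w t : R) : R := window (fun _ => 0) (fun x => - gauss x) w t.
Definition denom (w t : R) : R := window gauss_m2 gauss_m2 w t.

Lemma probA_mass w t : probA w t = mass w t / sqrt2pi.
Proof.
  apply EA_window; [| | intros; apply continuous_const];
    intros x; rewrite Rmult_1_l; apply gauss_int_derive.
Qed.

Lemma Fupd_ratio w t : denom w t <> 0 -> Fupd w t = numer w t / denom w t.
Proof.
  intros Hd. unfold Fupd.
  rewrite (EA_window _ (fun _ => 0) (fun x => - gauss x)), (EA_window _ gauss_m2 gauss_m2).
  - fold (numer w t) (denom w t).
    assert (sqrt2pi <> 0) by apply Rgt_not_eq, sqrt2pi_pos. field; auto.
  - apply gauss_m2_derive.
  - apply gauss_m2_derive.
  - intros b x. apply (@ex_derive_continuous R_AbsRing R_NormedModule). auto_derive. auto.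
  - intros x. replace (0 * x * gauss x) with 0 by ring. apply (@is_derive_const R_AbsRing R_NormedModule 0).
  - intros x. replace (1 * x * gauss x) with (- (- x * gauss x)) by ring.
    apply (is_derive_opp gauss), gauss_derive.
  - intros b x. apply (@ex_derive_continuous R_AbsRing R_NormedModule). auto_derive. auto.
Qed.

Lemma window_lt (F0 F1 : R -> R) (w t t' : R) :
  (forall x y, x < y -> F0 x < F0 y) -> (forall x y, x < y -> F1 x < F1 y) ->
  0 < w -> t < t' -> window F0 F1 w t < window F0 F1 w t'.
Proof.
  intros H0 H1 Hw Htt'.
  assert (Hdiv : forall a b, a < b -> a / w < b / w)
    by (intros; apply Rmult_lt_compat_r; [apply Rinv_0_lt_compat|]; lra).
  assert (F0 ((0 + t) / w) < F0 ((0 + t') / w)) by (apply H0, Hdiv; lra).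
  assert (F0 ((0 - t') / w) < F0 ((0 - t) / w)) by (apply H0, Hdiv; lra).
  assert (F1 ((1 + t) / w) < F1 ((1 + t') / w)) by (apply H1, Hdiv; lra).
  assert (F1 ((1 - t') / w) < F1 ((1 - t) / w)) by (apply H1, Hdiv; lra).
  unfold window, alpha. lra.
Qed.

Lemma window_continuous_along (F0 F1 tau : R -> R) (w : R) :
  (forall x, ex_derive F0 x) -> (forall x, ex_derive F1 x) ->
  0 < w -> continuity_pt tau w ->
  continuity_pt (fun y => window F0 F1 y (tau y)) w.
Proof.
  intros H0 H1 Hw Htau.
  assert (Hconst : forall k, continuity_pt (fun _ => k) w)
    by (intros k; apply continuity_pt_const; intros ? ?; reflexivity).
  assert (Hend : forall (F : R -> R) (k s : R), (forall x, ex_derive F x) ->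
            continuity_pt (fun y => F ((k + s * tau y) / y)) w).
  { intros F k s HF.
    apply (continuity_pt_comp (fun y => (k + s * tau y) / y) F);
      [|apply continuity_pt_of_ex_derive, HF].
    apply continuity_pt_div; [| apply continuity_pt_id | lra].
    apply continuity_pt_plus; [apply Hconst|].
    apply continuity_pt_mult; [apply Hconst | exact Htau]. }
  assert (Hincr : forall (F : R -> R) (k : R), (forall x, ex_derive F x) ->
            continuity_pt (fun y => F ((k + tau y) / y) - F ((k - tau y) / y)) w).
  { intros F k HF. apply continuity_pt_minus.
    - apply (continuity_pt_ext (fun y => F ((k + 1 * tau y) / y))); [intros y; now rewrite Rmult_1_l|].
      now apply Hend.
    - apply (continuity_pt_ext (fun y => F ((k + -1 * tau y) / y)));
        [intros y; f_equal; unfold Rdiv; ring|].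
      now apply Hend. }
  unfold window.
  apply continuity_pt_plus; apply continuity_pt_mult; auto.
Qed.

Lemma denom_pos w t : 0 < w -> 0 < t -> 0 < denom w t.
Proof.
  intros Hw Ht. unfold denom, window.
  replace ((0 - t) / w) with (- ((0 + t) / w)) by (field; lra).
  rewrite gauss_m2_odd.
  assert (0 < gauss_m2 ((0 + t) / w)).
  { apply gauss_m2_pos. unfold Rdiv. apply Rmult_lt_0_compat; [|apply Rinv_0_lt_compat]; lra. }
  assert (gauss_m2 ((1 - t) / w) <= gauss_m2 ((1 + t) / w)).
  { apply gauss_m2_le. apply Rmult_le_compat_r; [left; apply Rinv_0_lt_compat|]; lra. }
  unfold alpha; lra.
Qed.

(* The threshold.  [probA w t = 1 - alpha] means [mass w t = target]; as
   [mass w] increases strictly from [mass w 0 = 0] past [target], this has a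
   unique positive solution [tau w], which depends continuously on [w]. *)
Definition target : R := (1 - alpha) * sqrt2pi.

Lemma mass_lt w t t' : 0 < w -> t < t' -> mass w t < mass w t'.
Proof. apply window_lt; apply gauss_int_lt. Qed.

Lemma mass_0 w : mass w 0 = 0.
Proof. unfold mass, window. rewrite !Rplus_0_r, !Rminus_0_r. ring. Qed.

Lemma mass_continuous_in_t w t : continuity_pt (fun t => mass w t) t.
Proof.
  apply continuity_pt_of_ex_derive. unfold mass, window.
  auto_derive. repeat split; eexists; apply gauss_int_derive.
Qed.

Lemma tau_exists w : 0 < w -> exists t, 0 < t /\ mass w t = target.
Proof.
  intros Hw. set (T := 2 * w + 2).
  assert (Htarget : 0 < target < 1) by (unfold target, alpha; generalize sqrt2pi_bounds; lra).
  assert (HT : 1 < mass w T).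
  { assert (Hint2 : 1 < gauss_int 2) by (eapply Rlt_le_trans; [| apply (taylor_le_gauss_int 1); lra]; eval_taylor).
    assert (Hup : forall k, 0 <= k -> 1 < gauss_int ((k + T) / w)).
    { intros k Hk. eapply Rlt_le_trans; [apply Hint2 | apply gauss_int_le].
      apply Rmult_le_reg_r with w; auto. unfold T. field_simplify; lra. }
    assert (Hlow : forall k, k <= 1 -> gauss_int ((k - T) / w) <= 0).
    { intros k Hk. rewrite <- gauss_int_0. apply gauss_int_le.
      apply Rmult_le_reg_r with w; auto. unfold T. field_simplify; lra. }
    unfold mass, window. generalize (Hup 0) (Hup 1) (Hlow 0) (Hlow 1). unfold alpha. lra. }
  destruct (IVT (fun t => mass w t - target) 0 T) as [t [[Ht0 HtT] Ht]].
  - intros t. apply continuity_pt_minus; [apply mass_continuous_in_t|].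
    apply continuity_pt_const; intros ? ?; reflexivity.
  - unfold T; lra.
  - rewrite mass_0; lra.
  - lra.
  - exists t. destruct Ht0 as [Ht0|<-]; [split; lra|].
    rewrite mass_0 in Ht; lra.
Qed.

Definition tau (w : R) : R := epsilon (inhabits 0) (fun t => 0 < t /\ mass w t = target).

Lemma tau_spec w : 0 < w -> 0 < tau w /\ mass w (tau w) = target.
Proof. intros Hw. unfold tau. apply epsilon_spec, tau_exists, Hw. Qed.

Lemma tau_bracket w t1 t2 :
  0 < w -> mass w t1 < target -> target < mass w t2 -> t1 < tau w < t2.
Proof.
  intros Hw H1 H2. destruct (tau_spec w Hw) as [_ E].
  split; apply Rnot_le_lt; intros [Hlt|Heq].
  - generalize (mass_lt w _ _ Hw Hlt); lra.
  - rewrite Heq in E; lra.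
  - generalize (mass_lt w _ _ Hw Hlt); lra.
  - rewrite <- Heq in E; lra.
Qed.

Lemma tau_unique w t : 0 < w -> mass w t = target -> t = tau w.
Proof.
  intros Hw E. destruct (tau_spec w Hw) as [_ Et].
  destruct (Rtotal_order t (tau w)) as [H|[H|H]]; auto;
    generalize (mass_lt w _ _ Hw H); lra.
Qed.

Lemma tau_continuous w0 : 0 < w0 -> continuity_pt tau w0.
Proof.
  intros Hw0 eps Heps.
  destruct (tau_spec w0 Hw0) as [_ E0].
  set (t1 := tau w0 - eps / 2). set (t2 := tau w0 + eps / 2).
  assert (P1 : mass w0 t1 < target) by (rewrite <- E0; apply mass_lt; unfold t1; lra).
  assert (P2 : target < mass w0 t2) by (rewrite <- E0; apply mass_lt; unfold t2; lra).
  assert (Hcont : forall t, continuity_pt (fun w => mass w t) w0).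
  { intros t. apply (window_continuous_along gauss_int gauss_int (fun _ => t));
      try (intros; eexists; apply gauss_int_derive); auto.
    apply continuity_pt_const; intros ? ?; reflexivity. }
  destruct (Hcont t1 (target - mass w0 t1) ltac:(lra)) as [d1 [Hd1 D1]].
  destruct (Hcont t2 (mass w0 t2 - target) ltac:(lra)) as [d2 [Hd2 D2]].
  exists (Rmin (Rmin d1 d2) (w0 / 2)). split; [repeat apply Rmin_pos; lra|].
  intros w [_ Hw]. simpl in *. unfold R_dist in *.
  assert (Hm := Rmin_l (Rmin d1 d2) (w0 / 2)). assert (Hm' := Rmin_r (Rmin d1 d2) (w0 / 2)).
  assert (Hm1 := Rmin_l d1 d2). assert (Hm2 := Rmin_r d1 d2).
  assert (Hwp : 0 < w) by (apply Rabs_def2 in Hw; lra).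
  destruct (Req_dec w w0) as [->|Hne]; [rewrite Rminus_eq_0, Rabs_R0; lra|].
  assert (A1 : Rabs (mass w t1 - mass w0 t1) < target - mass w0 t1)
    by (apply D1; split; [split; [exact Logic.I | auto] | simpl; unfold R_dist; lra]).
  assert (A2 : Rabs (mass w t2 - mass w0 t2) < mass w0 t2 - target)
    by (apply D2; split; [split; [exact Logic.I | auto] | simpl; unfold R_dist; lra]).
  apply Rabs_def2 in A1. apply Rabs_def2 in A2.
  assert (B := tau_bracket w t1 t2 Hwp ltac:(lra) ltac:(lra)).
  apply Rabs_def1; unfold t1, t2 in B; lra.
Qed.

Lemma threshold_spec w :
  0 < w ->
  0 < tau w /\ probA w (tau w) = 1 - alpha /\
  (forall t, 0 < t -> probA w t = 1 - alpha -> t = tau w).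
Proof.
  intros Hw. destruct (tau_spec w Hw) as [Ht E].
  assert (Hc : sqrt2pi <> 0) by apply Rgt_not_eq, sqrt2pi_pos.
  split; [|split].
  - exact Ht.
  - rewrite probA_mass, E. unfold target. field. exact Hc.
  - intros t _ Pt. apply tau_unique; auto.
    rewrite probA_mass in Pt. unfold target. rewrite <- Pt. field. exact Hc.
Qed.

Definition fixed_gap (w : R) : R := w * denom w (tau w) - numer w (tau w).

Lemma fixed_gap_continuous w : 0 < w -> continuity_pt fixed_gap w.
Proof.
  intros Hw. assert (Htau := tau_continuous w Hw).
  apply continuity_pt_minus; [apply continuity_pt_mult; [apply continuity_pt_id|] |].
  - apply window_continuous_along; auto; intros x; eexists; apply gauss_m2_derive.
  - apply window_continuous_along; auto; intros x; eexists.
    + apply (@is_derive_const R_AbsRing R_NormedModule 0).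
    + apply (is_derive_opp gauss), gauss_derive.
Qed.

Lemma fixed_point_of_gap w : 0 < w -> fixed_gap w = 0 -> Fupd w (tau w) = w.
Proof.
  intros Hw Hgap. destruct (tau_spec w Hw) as [Ht _].
  assert (Hd := denom_pos w (tau w) Hw Ht).
  rewrite Fupd_ratio by lra. unfold fixed_gap in Hgap.
  apply (Rmult_eq_reg_r (denom w (tau w))); [|lra]. field_simplify; lra.
Qed.

(* At [w = 1/2]: the threshold lies in (0.385, 0.395), and there [F(w) > w]. *)
Lemma tau_at_half : 385 / 1000 < tau (1 / 2) < 395 / 1000.
Proof.
  generalize sqrt2pi_bounds; intros Hc.
  apply tau_bracket; [lra | |]; unfold mass, window, target, alpha.
  - replace ((0 + 385/1000) / (1/2)) with (77/100) by field.
    replace ((0 - 385/1000) / (1/2)) with (- (77/100)) by field.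
    replace ((1 + 385/1000) / (1/2)) with (277/100) by field.
    replace ((1 - 385/1000) / (1/2)) with (123/100) by field.
    rewrite gauss_int_odd.
    assert (gauss_int (77/100) <= 700227/1000000) by gauss_int_upper.
    assert (gauss_int (277/100) <= 1246321/1000000) by gauss_int_upper.
    assert (979217/1000000 <= gauss_int (123/100)) by gauss_int_lower.
    lra.
  - replace ((0 + 395/1000) / (1/2)) with (79/100) by field.
    replace ((0 - 395/1000) / (1/2)) with (- (79/100)) by field.
    replace ((1 + 395/1000) / (1/2)) with (279/100) by field.
    replace ((1 - 395/1000) / (1/2)) with (121/100) by field.
    rewrite gauss_int_odd.
    assert (35749/50000 <= gauss_int (79/100)) by gauss_int_lower.
    assert (623349/500000 <= gauss_int (279/100)) by gauss_int_lower.
    assert (gauss_int (121/100) <= 242429/250000) by gauss_int_upper.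
    lra.
Qed.

Lemma fixed_gap_at_half : fixed_gap (1 / 2) < 0.
Proof.
  assert (B := tau_at_half).
  unfold fixed_gap, denom, numer, window, alpha. set (t := tau (1 / 2)) in *.
  replace ((0 + t) / (1/2)) with (2 * t) by field.
  replace ((0 - t) / (1/2)) with (- (2 * t)) by field.
  replace ((1 + t) / (1/2)) with (2 + 2 * t) by field.
  replace ((1 - t) / (1/2)) with (2 - 2 * t) by field.
  rewrite gauss_m2_odd.
  assert (gauss_m2 (2 * t) <= gauss_m2 (79/100)) by (apply gauss_m2_le; lra).
  assert (gauss_m2 (2 + 2 * t) <= gauss_m2 (279/100)) by (apply gauss_m2_le; lra).
  assert (gauss_m2 (121/100) <= gauss_m2 (2 - 2 * t)) by (apply gauss_m2_le; lra).
  assert (gauss (123/100) <= gauss (2 - 2 * t)) by (apply gauss_antitone; lra).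
  assert (gauss (2 + 2 * t) <= gauss (277/100)) by (apply gauss_antitone; lra).
  assert (gauss_int (79/100) <= 714981/1000000) by gauss_int_upper.
  assert (gauss_int (279/100) <= 311687/250000) by gauss_int_upper.
  assert (193943/200000 <= gauss_int (121/100)) by gauss_int_lower.
  assert (91493/125000 <= gauss (79/100)) by gauss_lower.
  assert (4059/200000 <= gauss (279/100)) by gauss_lower.
  assert (gauss (121/100) <= 480923/1000000) by gauss_upper.
  assert (469329/1000000 <= gauss (123/100)) by gauss_lower.
  assert (gauss (277/100) <= 5481/250000) by gauss_upper.
  unfold gauss_m2 in *. lra.
Qed.

(* At [w = 3]: the threshold lies in (0.78, 0.81), and there [F(w) < w]. *)
Lemma tau_at_3 : 78 / 100 < tau 3 < 81 / 100.
Proof.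
  generalize sqrt2pi_bounds; intros Hc.
  apply tau_bracket; [lra | |]; unfold mass, window, target, alpha.
  - replace ((0 + 78/100) / 3) with (13/50) by field.
    replace ((0 - 78/100) / 3) with (- (13/50)) by field.
    replace ((1 + 78/100) / 3) with (89/150) by field.
    replace ((1 - 78/100) / 3) with (11/150) by field.
    rewrite gauss_int_odd.
    assert (gauss_int (13/50) <= 257101/1000000) by gauss_int_upper.
    assert (gauss_int (89/150) <= 140071/250000) by gauss_int_upper.
    assert (73267/1000000 <= gauss_int (11/150)) by gauss_int_lower.
    lra.
  - replace ((0 + 81/100) / 3) with (27/100) by field.
    replace ((0 - 81/100) / 3) with (- (27/100)) by field.
    replace ((1 + 81/100) / 3) with (181/300) by field.
    replace ((1 - 81/100) / 3) with (19/300) by field.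
    rewrite gauss_int_odd.
    assert (53351/200000 <= gauss_int (27/100)) by gauss_int_lower.
    assert (142161/250000 <= gauss_int (181/300)) by gauss_int_lower.
    assert (gauss_int (19/300) <= 15823/250000) by gauss_int_upper.
    lra.
Qed.

Lemma fixed_gap_at_3 : 0 < fixed_gap 3.
Proof.
  assert (B := tau_at_3).
  unfold fixed_gap, denom, numer, window, alpha. set (t := tau 3) in *.
  replace ((0 + t) / 3) with (t / 3) by field.
  replace ((0 - t) / 3) with (- (t / 3)) by field.
  rewrite gauss_m2_odd.
  assert (gauss_m2 (13/50) <= gauss_m2 (t / 3)) by (apply gauss_m2_le; lra).
  assert (gauss_m2 (89/150) <= gauss_m2 ((1 + t) / 3)) by (apply gauss_m2_le; lra).
  assert (gauss_m2 ((1 - t) / 3) <= gauss_m2 (11/150)) by (apply gauss_m2_le; lra).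
  assert (gauss ((1 - t) / 3) <= gauss (19/300)) by (apply gauss_antitone; lra).
  assert (gauss (181/300) <= gauss ((1 + t) / 3)) by (apply gauss_antitone; lra).
  assert (2571/10000 <= gauss_int (13/50)) by gauss_int_lower.
  assert (560283/1000000 <= gauss_int (89/150)) by gauss_int_lower.
  assert (gauss_int (11/150) <= 18317/250000) by gauss_int_upper.
  assert (gauss (13/50) <= 193353/200000) by gauss_upper.
  assert (gauss (89/150) <= 4193/5000) by gauss_upper.
  assert (498657/500000 <= gauss (11/150)) by gauss_lower.
  assert (gauss (19/300) <= 997997/1000000) by gauss_upper.
  assert (208399/250000 <= gauss (181/300)) by gauss_lower.
  unfold gauss_m2 in *. lra.
Qed.

Theorem mainTheorem12 :
  exists w : R, 1 / 2 < w /\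
    exists tau : R, 0 < tau /\ probA w tau = 1 - alpha /\
      (forall tau' : R, 0 < tau' -> probA w tau' = 1 - alpha -> tau' = tau) /\
      Fupd w tau = w.
Proof.
  assert (Hneg := fixed_gap_at_half). assert (Hpos := fixed_gap_at_3).
  destruct (IVT_interv fixed_gap (1 / 2) 3) as [w [[Hw1 Hw3] Hroot]];
    [intros; apply fixed_gap_continuous; lra | lra | exact Hneg | exact Hpos |].
  assert (Hw : 1 / 2 < w) by (destruct Hw1 as [|<-]; [assumption | lra]).
  destruct (threshold_spec w ltac:(lra)) as [Ht [Hprob Huniq]].
  exists w. split; [exact Hw|].
  exists (tau w). repeat split; auto.
  apply fixed_point_of_gap; [lra | exact Hroot].
Qed.
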